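(* Danzer's configuration $(35_4)$ is isomorphic to the combinatorial configuration $N(O_4)$ obtained by the $V$-construction from the Odd graph $O_4$.
   Context: Danzer's configuration: take seven 3-dimensional hyperplanes in general position (no five through a common point) in 4-dimensional projective space; they meet by fours in 35 points and by threes in 35 lines, a point being incident with a line iff the triple of hyperplanes defining the line is contained in the quadruple defining the point. Combinatorially: points are the 4-subsets and lines the 3-subsets of $\{1,\dots,7\}$, incidence is containment. The Odd graph $O_4$ is the Kneser graph $K(7,3)$: vertices are the 3-subsets of a 7-element set, adjacent iff disjoint. $V$-construction: for a regular graph $G$ in which no two distinct vertices have the same neighbourhood, $N(G)$ is the incidence structure whose points are the vertices of $G$, whose blocks are the neighbourhoods $N(v)$ of the vertices $v$, with incidence given by membership. Isomorphism of incidence structures means bijections on points and on blocks preserving incidence. *)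

From mathcomp Require Import all_boot.
Set Implicit Arguments. Unset Strict Implicit. Unset Printing Implicit Defensive.

Record incstr := IncStr {
  ipt : finType;
  iblk : finType;
  inc : ipt -> iblk -> bool }.

Definition isomorphic (S1 S2 : incstr) : Prop :=
  exists (f : ipt S1 -> ipt S2) (g : iblk S1 -> iblk S2),
    [/\ bijective f, bijective g &
        forall p b, inc p b = inc (f p) (g b)].

Definition ksub (k : nat) := {A : {set 'I_7} | #|A| == k}.

Definition Danzer : incstr :=
  @IncStr (ksub 4) (ksub 3) (fun P L => val L \subset val P).

Definition nbhd (V : finType) (adj : rel V) (v : V) : {set V} :=
  [set w | adj v w].

Definition nbhd_blocks (V : finType) (adj : rel V) :=
  {S : {set V} | [exists v, S == nbhd adj v]}.

Definition Vconstr (V : finType) (adj : rel V) : incstr :=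
  @IncStr V (nbhd_blocks adj) (fun p S => p \in val S).

Definition regular_graph (V : finType) (adj : rel V) : Prop :=
  exists k, forall v, #|nbhd adj v| = k.
Definition twin_free (V : finType) (adj : rel V) : Prop :=
  forall v w, nbhd adj v = nbhd adj w -> v = w.

(* Odd graph O_4 = Kneser graph K(7,3): 3-subsets, adjacent iff disjoint. *)
Definition O4_adj : rel (ksub 3) := fun A B => [disjoint val A & val B].

From mathcomp Require Import all_boot.

Set Implicit Arguments.
Unset Strict Implicit.
Unset Printing Implicit Defensive.

(* Complementation in {1,...,7} exchanges 4-subsets and 3-subsets, and a
   4-subset P contains a 3-subset L iff the triple ~P is disjoint from L, i.e.
   iff ~P is a neighbour of L in O_4.  So P |-> ~P and L |-> N(L) form an
   isomorphism, provided L |-> N(L) is injective: every point outside a triple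
   w lies in a triple disjoint from w, so N(w) determines w. *)

Section Neighbourhoods.

Variables (V : finType) (adj : rel V).

Lemma nbhd_blockP (v : V) : [exists w, nbhd adj v == nbhd adj w].
Proof. by apply/existsP; exists v. Qed.

Definition nbhd_block (v : V) : nbhd_blocks adj :=
  exist _ (nbhd adj v) (nbhd_blockP v).

Lemma nbhd_block_bij : twin_free adj -> bijective nbhd_block.
Proof.
move=> twin; pose center (S : nbhd_blocks adj) := xchoose (existsP (valP S)).
have nbhd_center S : nbhd adj (center S) = val S.
  by apply/esym/eqP; exact: xchooseP (existsP (valP S)).
exists center => [v | S]; last by apply: val_inj; rewrite /= nbhd_center.
by apply: twin; rewrite nbhd_center.
Qed.

End Neighbourhoods.

Lemma subset_card_mem (T : finType) (C : {set T}) (x : T) (k : nat) :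
  x \in C -> #|C| = k.+2 ->
  exists2 B : {set T}, B \subset C & x \in B /\ #|B| = k.+1.
Proof.
move=> xC cardC.
have cardCx : #|C :\ x| = k.+1 by move: cardC; rewrite (cardsD1 x) xC => -[].
have [y] : exists y, y \in C :\ x by apply/card_gt0P; rewrite cardCx.
rewrite !inE => /andP [yx yC]; exists (C :\ y); first exact: subsetDl.
split; first by rewrite !inE xC eq_sym yx.
by move: cardC; rewrite (cardsD1 y) yC => -[].
Qed.

Lemma card_ksub (k : nat) (A : ksub k) : #|val A| = k.
Proof. exact/eqP/(valP A). Qed.

Lemma card_ksubC (k : nat) (A : ksub k) : #|~: val A| == 7 - k.
Proof. by rewrite (cardsCs (~: _)) setCK card_ord card_ksub. Qed.

Definition ksubC (k : nat) (A : ksub k) : ksub (7 - k) :=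
  exist _ (~: val A) (card_ksubC A).

Lemma ksubC_bij : bijective (@ksubC 4).
Proof. by exists (@ksubC 3) => A; apply: val_inj; rewrite /= setCK. Qed.

Lemma mem_nbhd_O4 (v w : ksub 3) :
  (w \in nbhd O4_adj v) = (val w \subset ~: val v).
Proof. by rewrite inE /O4_adj disjoint_sym disjoints_subset. Qed.

Lemma card_nbhd_O4 (v : ksub 3) : #|nbhd O4_adj v| = 4.
Proof.
rewrite -(card_imset _ val_inj).
have -> : val @: nbhd O4_adj v =
          [set B : {set 'I_7} | B \subset ~: val v & #|B| == 3].
  apply/setP => B; rewrite inE; apply/imsetP/andP => [[w] | [Bv B3]].
    by rewrite mem_nbhd_O4 => wv ->; split; last exact: (valP w).
  by exists (exist _ B B3); rewrite ?mem_nbhd_O4.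
by rewrite cards_draws (eqP (card_ksubC v)).
Qed.

Lemma nbhd_O4_cover (w : ksub 3) (x : 'I_7) :
  x \notin val w -> exists2 B : ksub 3, B \in nbhd O4_adj w & x \in val B.
Proof.
move=> xw; have xCw : x \in ~: val w by rewrite inE.
have [B Bw [xB /eqP B3]] := subset_card_mem xCw (eqP (card_ksubC w)).
by exists (exist _ B B3); rewrite ?mem_nbhd_O4.
Qed.

Lemma nbhd_O4_subset (v w : ksub 3) :
  nbhd O4_adj v = nbhd O4_adj w -> val v \subset val w.
Proof.
move=> vw; apply/subsetPn => -[x xv xw].
have [B Bw xB] := nbhd_O4_cover xw.
move: Bw; rewrite -vw mem_nbhd_O4 => /subsetP /(_ x xB).
by rewrite inE xv.
Qed.

Lemma twin_free_O4 : twin_free O4_adj.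
Proof.
move=> v w vw; apply/val_inj/eqP; rewrite eqEsubset.
by rewrite !nbhd_O4_subset.
Qed.

Theorem corollary3p5 :
  regular_graph O4_adj /\ twin_free O4_adj /\
  isomorphic Danzer (Vconstr O4_adj).
Proof.
split; first by exists 4; exact: card_nbhd_O4.
split; first exact: twin_free_O4.
exists (@ksubC 4), (nbhd_block O4_adj); split.
- exact: ksubC_bij.
- exact: nbhd_block_bij twin_free_O4.
- by move=> P L; rewrite /= mem_nbhd_O4 setCS.
Qed.
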